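(* Let $d\ge 2$ and let $\tau$ be the identity ordering $\tau(t)=t$ (each task seen once, $T=k$). There is an absolute constant $C>0$ such that for every $k\ge 2$, $$1-\sup_{S\in\mathcal{S}_{T=k}}F_{\tau,S}(k)\le \frac{C}{\sqrt{k}}.$$ In particular, for every $\epsilon\in(0,1)$ there is a task collection of $k=O(1/\epsilon^2)$ tasks with $F_{\tau,S}(k)>1-\epsilon$.
   Context: Let $d\ge 1$, $T\ge1$. A task is a pair $(X_m,y_m)$ with $X_m\in\mathbb{R}^{n_m\times d}$, $y_m\in\mathbb{R}^{n_m}$ and $\operatorname{rank}(X_m)<d$. $\mathcal{S}_T$ denotes the set of collections $S=\{(X_m,y_m)\}_{m=1}^T$ of $T$ tasks such that $\|X_m\|\le 1$ (spectral norm) for all $m$ and there exists $w\in\mathbb{R}^d$ with $\|w\|\le 1$ and $y_m=X_mw$ for all $m$. A task ordering is a map $\tau:\mathbb{N}^+\to\{1,\dots,T\}$. Given $S$ and $\tau$, the iterates are $w_0=0$ and $w_t=w_{t-1}+X_{\tau(t)}^+(y_{\tau(t)}-X_{\tau(t)}w_{t-1})$ for $t\ge1$, where $A^+$ is the Moore–Penrose pseudoinverse. The forgetting at iteration $k$ is $F_{\tau,S}(k)=\frac1k\sum_{t=1}^k\|X_{\tau(t)}w_k-y_{\tau(t)}\|^2$. *)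

From HB Require Import structures.
From mathcomp Require Import all_boot all_order all_algebra.
From mathcomp Require Import boolp classical_sets reals.
Set Implicit Arguments. Unset Strict Implicit. Unset Printing Implicit Defensive.
Import Order.TTheory GRing.Theory Num.Theory.
Local Open Scope ring_scope.
Local Open Scope classical_set_scope.

Section Defs.
Variable R : realType.

Definition enorm (n : nat) (v : 'cV[R]_n) : R := Num.sqrt (\sum_(i < n) v i 0 ^+ 2).

Definition opnorm_le1 (m n : nat) (A : 'M[R]_(m, n)) : Prop :=
  forall v : 'cV[R]_n, enorm (A *m v) <= enorm v.

Definition is_MP_pinv (m n : nat) (A : 'M[R]_(m, n)) (B : 'M[R]_(n, m)) : Prop :=
  [/\ A *m B *m A = A, B *m A *m B = B, (A *m B)^T = A *m B & (B *m A)^T = B *m A].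

(* the Moore-Penrose pseudoinverse (exists and is unique) *)
Definition mp_pinv (m n : nat) (A : 'M[R]_(m, n)) : 'M[R]_(n, m) :=
  xget 0 [set B | is_MP_pinv A B].

Definition task (d : nat) := {n : nat & ('M[R]_(n, d) * 'cV[R]_n)%type}.
Definition tX d (s : task d) : 'M[R]_(projT1 s, d) := (projT2 s).1.
Definition ty d (s : task d) : 'cV[R]_(projT1 s) := (projT2 s).2.

(* S_T : collections S = (S 1, ..., S T) of T tasks (values of S outside
   1..T are irrelevant), with rank X_m < d, ||X_m|| <= 1 and a common
   solution w with ||w|| <= 1. *)
Definition in_ST (d T : nat) (S : nat -> task d) : Prop :=
  (forall m, (1 <= m <= T)%N -> (\rank (tX (S m)) < d)%N /\ opnorm_le1 (tX (S m))) /\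
  exists w : 'cV[R]_d, enorm w <= 1 /\
    forall m, (1 <= m <= T)%N -> ty (S m) = tX (S m) *m w.

Fixpoint iterate (d : nat) (S : nat -> task d) (tau : nat -> nat) (t : nat) : 'cV[R]_d :=
  match t with
  | 0 => 0
  | t'.+1 => let w := iterate S tau t' in
             let s := S (tau t) in
             w + mp_pinv (tX s) *m (ty s - tX s *m w)
  end.

Definition forgetting (d : nat) (S : nat -> task d) (tau : nat -> nat) (k : nat) : R :=
  k%:R^-1 * \sum_(1 <= t < k.+1)
     enorm (tX (S (tau t)) *m iterate S tau k - ty (S (tau t))) ^+ 2.

Definition sup_forgetting_id (d k : nat) : R :=
  sup [set x | exists S : nat -> task d, in_ST k S /\ x = forgetting S id k].

End Defs.

(* Take the target [w = e1] in the plane spanned by two coordinate vectors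
   [e1], [e2], and let [m] be about [sqrt k].  The first [k - m] tasks all ask
   for the [e2]-coordinate of [w], which [w_0 = 0] already fits.  Task
   [k - m + j] has normal orthogonal to [(m - j, j)], so it projects the error
   [w_t - w], initially [-e1], onto that line: after [m] steps the error points
   along [e2].  Each step turns it by an angle of order [1/m] and keeps a
   fraction [1 - 4/m^2] of its squared norm, so it ends with squared norm at
   least [1 - 4/m], and all of the first [k - m] tasks are forgotten:
   [F >= (1 - m/k) (1 - 4/m) >= 1 - 6/sqrt k].  Conversely [F <= 1], since the
   iterates are orthogonal projections of the error and never increase it. *)

From HB Require Import structures.
From mathcomp Require Import all_boot all_order all_algebra.
From mathcomp Require Import boolp classical_sets reals.
From mathcomp Require Import ring lra zify.

Set Implicit Arguments. Unset Strict Implicit. Unset Printing Implicit Defensive.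
Import Order.TTheory GRing.Theory Num.Theory.
Local Open Scope ring_scope.

Section DotProduct.
Variables (R : realFieldType) (d : nat).

Definition dot (u v : 'cV[R]_d) : R := (u^T *m v) 0 0.

Lemma dotE u v : dot u v = \sum_i u i 0 * v i 0.
Proof. by rewrite /dot !mxE; apply: eq_bigr => i _; rewrite mxE. Qed.

Lemma dotC u v : dot u v = dot v u.
Proof. by rewrite !dotE; apply: eq_bigr => i _; rewrite mulrC. Qed.

Lemma dotDl u v w : dot (u + v) w = dot u w + dot v w.
Proof. by rewrite !dotE -big_split /=; apply: eq_bigr => i _; rewrite mxE mulrDl. Qed.

Lemma dotZl a u w : dot (a *: u) w = a * dot u w.
Proof. by rewrite !dotE mulr_sumr; apply: eq_bigr => i _; rewrite mxE mulrA. Qed.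

Lemma dotNl u w : dot (- u) w = - dot u w.
Proof. by rewrite -scaleN1r dotZl mulN1r. Qed.

Lemma dotBl u v w : dot (u - v) w = dot u w - dot v w.
Proof. by rewrite dotDl dotNl. Qed.

Lemma dotDr u v w : dot w (u + v) = dot w u + dot w v.
Proof. by rewrite !(dotC w) dotDl. Qed.

Lemma dotZr a u w : dot w (a *: u) = a * dot w u.
Proof. by rewrite !(dotC w) dotZl. Qed.

Lemma dotNr u w : dot w (- u) = - dot w u.
Proof. by rewrite !(dotC w) dotNl. Qed.

Lemma dotBr u v w : dot w (u - v) = dot w u - dot w v.
Proof. by rewrite !(dotC w) dotBl. Qed.

Lemma dotmxr u (A : 'M[R]_d) v : dot u (A *m v) = dot (A^T *m u) v.
Proof. by rewrite /dot trmx_mul trmxK mulmxA. Qed.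

Lemma dot_ge0 u : 0 <= dot u u.
Proof. by rewrite dotE; apply: sumr_ge0 => i _; rewrite -expr2 sqr_ge0. Qed.

Lemma dot_delta (i j : 'I_d) :
  dot (delta_mx i 0) (delta_mx j 0) = (i == j)%:R.
Proof.
rewrite /dot trmx_delta mul_delta_mx_cond.
by case: (i == j); rewrite ?mulr1n ?mulr0n !mxE.
Qed.

Lemma dot_sqr_le u v : 0 < dot u u -> dot u v ^+ 2 <= dot u u * dot v v.
Proof.
move=> hu; have h := dot_ge0 (dot u u *: v - dot u v *: u).
rewrite !(dotBl, dotBr, dotZl, dotZr) (dotC v u) in h.
have : 0 <= dot u u * (dot u u * dot v v - dot u v ^+ 2).
  by move: h; congr (_ <= _); ring.
by rewrite pmulr_rge0 // subr_ge0.
Qed.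

Lemma dot_sub_proj_le (P : 'M[R]_d) (e : 'cV[R]_d) : P^T = P -> P *m P = P ->
  dot (e - P *m e) (e - P *m e) <= dot e e.
Proof.
move=> hT hP.
have hPe : dot (P *m e) (P *m e) = dot (P *m e) e by rewrite dotmxr mulmxA hT hP.
rewrite !dotBl !dotBr (dotC e) -hPe.
by have := dot_ge0 (P *m e); lra.
Qed.

End DotProduct.

Section EuclideanNorm.
Variables (R : realType) (d : nat).

Lemma enorm_sqr (u : 'cV[R]_d) : enorm u ^+ 2 = dot u u.
Proof.
have hsum : \sum_(i < d) u i 0 ^+ 2 = dot u u.
  by rewrite dotE; apply: eq_bigr => i _; rewrite expr2.
by rewrite /enorm hsum sqr_sqrtr ?dot_ge0.
Qed.

Lemma enorm_tr_mulmx (x v : 'cV[R]_d) : enorm (x^T *m v) ^+ 2 = dot x v ^+ 2.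
Proof. by rewrite /enorm big_ord1 sqr_sqrtr ?sqr_ge0. Qed.

Lemma opnorm_le1_tr (x : 'cV[R]_d) :
  0 < dot x x -> dot x x <= 1 -> opnorm_le1 (x^T).
Proof.
move=> hx0 hx1 v; have hv := dot_ge0 v.
have hxv : dot x v ^+ 2 <= dot v v.
  by have := dot_sqr_le v hx0; nra.
by rewrite -(ler_pXn2r (n := 2)) ?nnegrE ?sqrtr_ge0 // enorm_tr_mulmx enorm_sqr.
Qed.

End EuclideanNorm.

Section PseudoInverse.
Variable R : realType.

Lemma is_MP_pinv_unique m n (A : 'M[R]_(m, n)) B1 B2 :
  is_MP_pinv A B1 -> is_MP_pinv A B2 -> B1 = B2.
Proof.
move=> [h1 h2 h3 h4] [g1 g2 g3 g4].
have AT2 : A^T = A^T *m (A *m B2) by rewrite -{1}g1 trmx_mul g3.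
have AT1 : A^T = (B1 *m A) *m A^T by rewrite -{1}h1 -mulmxA trmx_mul h4.
have E1 : B1 = B1 *m A *m B2.
  rewrite -[in LHS]h2 -mulmxA -h3 trmx_mul mulmxA AT2.
  by rewrite !mulmxA -[B1 *m B1^T *m A^T]mulmxA -trmx_mul h3 mulmxA h2.
have E2 : B2 = B1 *m A *m B2.
  rewrite -[in LHS]g2 -g4 trmx_mul AT1.
  rewrite -[B1 *m A *m A^T *m B2^T]mulmxA -trmx_mul g4 mulmxA.
  by rewrite -!mulmxA (mulmxA B2) g2.
by rewrite E1 -E2.
Qed.

Lemma mp_pinvE m n (A : 'M[R]_(m, n)) B : is_MP_pinv A B -> mp_pinv A = B.
Proof.
move=> hB; apply: (is_MP_pinv_unique _ hB).
by have := xgetPex 0 (ex_intro _ B hB).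
Qed.

(* If [A] had no pseudoinverse, [mp_pinv A] is [0] and the claim is trivial. *)
Lemma mp_pinv_proj m n (A : 'M[R]_(m, n)) (P := mp_pinv A *m A) :
  P^T = P /\ P *m P = P.
Proof.
rewrite {}/P; case: (pselect (exists B, is_MP_pinv A B)) => [hA | hA].
  have [_ h2 _ h4] : is_MP_pinv A (mp_pinv A) := xgetPex 0 hA.
  by rewrite mulmxA h2.
rewrite /mp_pinv xgetPN ?mul0mx ?trmx0 // => B hB.
by apply: hA; exists B.
Qed.

Lemma mp_pinv_tr d (x : 'cV[R]_d) : dot x x != 0 ->
  mp_pinv x^T = (dot x x)^-1 *: x.
Proof.
move=> hx; apply: mp_pinvE; set B := _ *: x.
have xB : x^T *m B = 1%:M.
  rewrite /B -scalemxAr [x^T *m x]mx11_scalar scale_scalar_mx -/(dot x x).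
  by rewrite mulVf.
split.
- by rewrite xB mul1mx.
- by rewrite -mulmxA xB mulmx1.
- by rewrite xB trmx1.
- by rewrite /B -scalemxAl linearZ /= trmx_mul trmxK.
Qed.

End PseudoInverse.

Section Iterates.
Variables (R : realType) (d : nat).
Implicit Types (S : nat -> task R d) (tau : nat -> nat) (w : 'cV[R]_d).

Lemma iterate_dist_le S tau w t :
  ty (S (tau t.+1)) = tX (S (tau t.+1)) *m w ->
  dot (iterate S tau t.+1 - w) (iterate S tau t.+1 - w)
    <= dot (iterate S tau t - w) (iterate S tau t - w).
Proof.
move=> hw /=; rewrite hw; set X := tX _; set v := iterate S tau t.
have -> : v + mp_pinv X *m (X *m w - X *m v) - w
          = (v - w) - (mp_pinv X *m X) *m (v - w).
  by rewrite !mulmxBr !mulmxA opprB addrAC.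
by have [hT hP] := mp_pinv_proj X; apply: dot_sub_proj_le.
Qed.

Lemma forgetting_le1 k S : in_ST k S -> forgetting S id k <= 1.
Proof.
case=> hX [w [hw1 hw]].
have hdist t : (t <= k)%N -> dot (iterate S id t - w) (iterate S id t - w) <= 1.
  elim: t => [|t IH] ht.
    by rewrite /= sub0r dotNl dotNr opprK -enorm_sqr expr_le1 // sqrtr_ge0.
  by apply: le_trans (IH (ltnW ht)); apply: iterate_dist_le; rewrite hw ?ht.
have hterm t : (1 <= t < k.+1)%N ->
    enorm (tX (S t) *m iterate S id k - ty (S t)) ^+ 2 <= 1.
  move=> /andP[t1 t2]; have htk : (1 <= t <= k)%N by rewrite t1 -ltnS.
  rewrite hw // -mulmxBr; have [_ hop] := hX t htk.
  apply: le_trans (hdist k (leqnn k)); rewrite -enorm_sqr.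
  by apply: lerXn2r; rewrite ?nnegrE ?sqrtr_ge0 //; apply: hop.
rewrite /forgetting; case: k hX hw hdist hterm => [|k] _ _ _ hterm.
  by rewrite invr0 mul0r.
have := ler_sum_nat hterm; rewrite sumr_const_nat subn1 /= => hsum.
by rewrite mulrC ler_pdivrMr ?ltr0n // mul1r.
Qed.

End Iterates.

Section RealInequalities.
Variable R : realFieldType.

Lemma bernoulli_ineq (x : R) n : -1 <= x -> 1 + n%:R * x <= (1 + x) ^+ n.
Proof.
move=> hx; elim: n => [|n IH]; first by rewrite mul0r addr0 expr0.
rewrite exprS -natr1.
have hx1 : 0 <= 1 + x by lra.
have hnx : 0 <= n%:R * x ^+ 2 by rewrite mulr_ge0 ?ler0n ?sqr_ge0.
by have := ler_wpM2l hx1 IH; nra.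
Qed.

(* With [P = p^2 + q^2], [Q = p'^2 + q'^2] for [(p, q) = (M - J, J)] and
   [(p', q') = (M - J - 1, J + 1)], Lagrange's identity gives
   [(p p' + q q')^2 = P Q - (p q' - q p')^2 = P Q - M^2], and [P, Q >= M^2 / 2]. *)
Lemma rotation_sqr_norm_ge (M J c G : R) :
  2 <= M -> 0 <= J -> J + 1 <= M ->
  G <= c ^+ 2 * ((M - J) ^+ 2 + J ^+ 2) ->
  G * (1 - 4 / M ^+ 2) <=
  ((c * (M - J) * (M - (J + 1)) + c * J * (J + 1)) /
     ((M - (J + 1)) ^+ 2 + (J + 1) ^+ 2)) ^+ 2
    * ((M - (J + 1)) ^+ 2 + (J + 1) ^+ 2).
Proof.
move=> hM hJ hJM hGc.
set P := (M - J) ^+ 2 + J ^+ 2; set Q := (M - (J + 1)) ^+ 2 + (J + 1) ^+ 2.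
have hQ : 0 < Q by rewrite /Q; nra.
have hM2 : 0 < M ^+ 2 by nra.
have hP2 : M ^+ 2 <= 2 * P by have := sqr_ge0 (M - 2 * J); rewrite /P; nra.
have hQ2 : M ^+ 2 <= 2 * Q by have := sqr_ge0 (M - 2 * (J + 1)); rewrite /Q; nra.
have -> : ((c * (M - J) * (M - (J + 1)) + c * J * (J + 1)) / Q) ^+ 2 * Q
          = c ^+ 2 * P - c ^+ 2 * M ^+ 2 / Q.
  by rewrite /P /Q; field; rewrite -/Q lt0r_neq0.
set u := 4 / M ^+ 2.
have hu : u * M ^+ 2 = 4 by rewrite /u mulfVK // lt0r_neq0.
have hu1 : u <= 1 by rewrite /u ler_pdivrMr //; nra.
have hu0 : 0 <= u by rewrite /u divr_ge0 // ltW.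
have hloss : c ^+ 2 * M ^+ 2 / Q <= c ^+ 2 * P * u.
  have hQM : 0 < Q * M ^+ 2 by rewrite mulr_gt0.
  rewrite -(ler_pM2r hQM) mulrA mulfVK ?lt0r_neq0 //.
  have -> : c ^+ 2 * P * u * (Q * M ^+ 2) = c ^+ 2 * (4 * (P * Q)) by rewrite -hu; ring.
  have hPQ : M ^+ 2 * M ^+ 2 <= 4 * (P * Q) by nra.
  by rewrite -mulrA ler_wpM2l ?sqr_ge0.
have hGu : G * (1 - u) <= c ^+ 2 * P * (1 - u) by apply: ler_wpM2r; [lra | exact: hGc].
lra.
Qed.

Lemma sqrt_gap_bound (K M s : R) : 1 <= s -> s ^+ 2 = K -> s <= M -> M <= s + 1 ->
  1 - (K - M) / K * (1 - 4 / M) <= 6 / s.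
Proof.
move=> hs hK hsM hMs; subst K.
have hM0 : M != 0 by apply: lt0r_neq0; lra.
have hs0 : s != 0 by apply: lt0r_neq0; lra.
have hMs2 : 0 < M * s ^+ 2 by apply: mulr_gt0; [lra | apply: exprn_gt0; lra].
rewrite -(ler_pM2r hMs2).
have -> : (1 - (s ^+ 2 - M) / s ^+ 2 * (1 - 4 / M)) * (M * s ^+ 2)
          = 4 * s ^+ 2 + M ^+ 2 - 4 * M by field; rewrite ?hM0 ?hs0 ?expf_neq0.
have -> : 6 / s * (M * s ^+ 2) = 6 * s * M by field; rewrite ?hs0.
nra.
Qed.

End RealInequalities.

Section RowTasks.
Variables (R : realType) (d : nat).

Definition row_task (x w : 'cV[R]_d) : task R d := existT _ 1%N (x^T, x^T *m w).

Lemma iterate_row_task (S : nat -> task R d) tau t x w :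
  S (tau t.+1) = row_task x w -> dot x x != 0 ->
  iterate S tau t.+1 - w
    = (iterate S tau t - w) - (dot x (iterate S tau t - w) / dot x x) *: x.
Proof.
move=> hS hx /=; rewrite hS /tX /ty /= mp_pinv_tr //.
set e := iterate S tau t - w.
rewrite -mulmxBr [x^T *m _]mx11_scalar -/(dot x _) -scalemxAl mul_mx_scalar.
by rewrite scalerA -[w - _]opprB dotNr /e mulrN mulrC scaleNr addrAC.
Qed.

End RowTasks.

Section RotatingTasks.
Variables (R : realType) (d : nat) (i0 i1 : 'I_d).
Hypothesis i01 : i0 != i1.

Let e1 : 'cV[R]_d := delta_mx i0 0.
Let e2 : 'cV[R]_d := delta_mx i1 0.
Definition vec2 (a b : R) : 'cV[R]_d := a *: e1 + b *: e2.

Lemma dot_vec2 a b a' b' : dot (vec2 a b) (vec2 a' b') = a * a' + b * b'.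
Proof.
rewrite /vec2 !(dotDl, dotDr, dotZl, dotZr) !dot_delta !eqxx (negbTE i01).
by rewrite eq_sym (negbTE i01) /=; ring.
Qed.

Lemma vec2B a b a' b' : vec2 a b - vec2 a' b' = vec2 (a - a') (b - b').
Proof. by rewrite /vec2 opprD addrACA -!scalerBl. Qed.

Lemma vec2Z s a b : s *: vec2 a b = vec2 (s * a) (s * b).
Proof. by rewrite /vec2 scalerDr !scalerA. Qed.

Lemma vec2_proj a b p q l : l != 0 -> p ^+ 2 + q ^+ 2 != 0 ->
  let x := vec2 (- (l * q)) (l * p) in
  vec2 a b - (dot x (vec2 a b) / dot x x) *: x
    = ((a * p + b * q) / (p ^+ 2 + q ^+ 2)) *: vec2 p q.
Proof.
move=> hl hpq x.
have hx : - (l * q) * - (l * q) + l * p * (l * p) != 0.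
  rewrite (_ : _ + _ = l ^+ 2 * (p ^+ 2 + q ^+ 2)); last by ring.
  by rewrite mulf_neq0 ?expf_neq0.
by rewrite /x !dot_vec2 !vec2Z vec2B; congr vec2; field; rewrite hpq hx.
Qed.

Variables k m : nat.
Hypotheses (m_ge2 : (2 <= m)%N) (m_le_k : (m <= k)%N).

Let M : R := m%:R.
Let l : R := M^-1.

Let M_ge2 : 2 <= M. Proof. by rewrite /M (ler_nat R 2 m). Qed.
Let lM : l * M = 1. Proof. by rewrite /l mulVf //; have := M_ge2; lra. Qed.

Definition rot_normal (j : nat) := vec2 (- (l * j%:R)) (l * (M - j%:R)).

(* The truncated subtraction makes the first [k - m] tasks all equal, with
   normal [rot_normal 0 = e2]. *)
Definition rot_tasks (t : nat) := row_task (rot_normal (t - (k - m))) e1.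

Lemma dot_rot_normal j : (j <= m)%N ->
  0 < dot (rot_normal j) (rot_normal j) <= 1.
Proof.
move=> hj; rewrite /rot_normal dot_vec2.
have hJM : j%:R <= M by rewrite /M ler_nat.
have hJ0 : 0 <= j%:R :> R by rewrite ler0n.
have hM := M_ge2; have hl := lM.
rewrite (_ : _ + _ = l ^+ 2 * (j%:R ^+ 2 + (M - j%:R) ^+ 2)); last by ring.
apply/andP; split.
  apply: mulr_gt0; first by rewrite exprn_gt0 // /l invr_gt0; lra.
  by have := sqr_ge0 (M - 2 * j%:R); nra.
rewrite [X in _ <= X](_ : 1 = l ^+ 2 * M ^+ 2); last by rewrite -exprMn hl expr1n.
apply: ler_wpM2l; first exact: sqr_ge0.
have hMJ : 0 <= M - j%:R by lra.
by have := mulr_ge0 hJ0 hMJ; nra.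
Qed.

Lemma rot_tasks_in_ST : in_ST k rot_tasks.
Proof.
have hd : (1 < d)%N by case: i0 i1 i01 => [[|a] ?] [[|b] ?] //= _; lia.
split.
  move=> t /andP[t1 t2]; split; first exact: leq_ltn_trans (rank_leq_row _) hd.
  have /andP[h0 h1] := @dot_rot_normal (t - (k - m))%N ltac:(lia).
  exact: opnorm_le1_tr.
exists e1; split=> //.
by rewrite -(ler_pXn2r (n := 2)) ?nnegrE ?sqrtr_ge0 // enorm_sqr dot_delta eqxx expr1n.
Qed.

Lemma iterate_rot_tasks_init t : (t <= k - m)%N ->
  iterate rot_tasks id t - e1 = vec2 (-1) 0.
Proof.
elim: t => [|t IH] ht; first by rewrite /= sub0r /vec2 scale0r addr0 scaleN1r.
have hS : rot_tasks t.+1 = row_task (rot_normal 0) e1.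
  by rewrite /rot_tasks (_ : (t.+1 - (k - m) = 0)%N) //; lia.
have /andP[hx _] := dot_rot_normal (leq0n m).
rewrite (iterate_row_task (tau := id) hS (lt0r_neq0 hx)) IH; last by lia.
by rewrite /rot_normal dot_vec2 !mulr0 oppr0 mul0r add0r mul0r scale0r subr0.
Qed.

Lemma iterate_rot_tasks_rotate j : (j <= m)%N -> exists c : R,
  iterate rot_tasks id (k - m + j) - e1 = c *: vec2 (M - j%:R) j%:R /\
  (1 - 4 / M ^+ 2) ^+ j <= c ^+ 2 * ((M - j%:R) ^+ 2 + j%:R ^+ 2).
Proof.
have hM := M_ge2; have hl := lM.
elim: j => [|j IH] hj.
  exists (- l); rewrite addn0 iterate_rot_tasks_init // vec2Z subr0 mulr0 mulNr hl.
  by rewrite expr0 expr0n /= addr0 sqrrN -exprMn hl expr1n.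
have [c [hc hb]] := IH (ltnW hj).
have hS : rot_tasks (k - m + j).+1 = row_task (rot_normal j.+1) e1.
  by rewrite /rot_tasks (_ : ((k - m + j).+1 - (k - m) = j.+1)%N) //; lia.
have /andP[hx _] := dot_rot_normal hj.
have hJM : j.+1%:R <= M by rewrite /M ler_nat.
have hJ0 : 0 <= j%:R :> R by rewrite ler0n.
have hq : (M - j.+1%:R) ^+ 2 + j.+1%:R ^+ 2 != 0.
  by rewrite -[j.+1%:R]natr1; have := sqr_ge0 (M - (j%:R + 1)); nra.
rewrite addnS (iterate_row_task (tau := id) hS (lt0r_neq0 hx)) hc vec2Z /rot_normal.
rewrite (vec2_proj _ _ _ hq); last by rewrite /l invr_neq0 //; lra.
eexists; split; first reflexivity.
rewrite -[j.+1%:R]natr1 exprS mulrC.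
by apply: rotation_sqr_norm_ge => //; lra.
Qed.

Lemma forgetting_rot_tasks_ge :
  (k - m)%:R / k%:R * (1 - 4 / M) <= forgetting rot_tasks id k.
Proof.
have hM := M_ge2; have hl := lM.
have [c [hc hb]] := iterate_rot_tasks_rotate (leqnn m).
rewrite subnK // subrr in hc; rewrite subrr expr0n /= add0r in hb.
have herr : 1 - 4 / M <= c ^+ 2 * M ^+ 2.
  apply: le_trans hb; apply: le_trans (bernoulli_ineq m (_ : -1 <= - (4 / M ^+ 2))).
    by rewrite le_eqVlt; apply/orP; left; apply/eqP; rewrite -/M; field; lra.
  by rewrite lerNl opprK ler_pdivrMr; nra.
have hfirst t : (1 <= t < (k - m).+1)%N ->
    1 - 4 / M <= enorm (tX (rot_tasks t) *m iterate rot_tasks id k - ty (rot_tasks t)) ^+ 2.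
  move=> /andP[t1 t2].
  rewrite /rot_tasks (_ : (t - (k - m) = 0)%N); last by lia.
  rewrite /tX /ty /= -mulmxBr enorm_tr_mulmx hc vec2Z /rot_normal dot_vec2.
  rewrite (_ : _ + _ = (l * M) * (c * M)); last by rewrite /M; ring.
  by rewrite hl mul1r exprMn.
rewrite /forgetting (big_cat_nat _ (n := (k - m).+1)) //=; last by lia.
have hsum_first := ler_sum_nat hfirst.
have hsum_rest : 0 <= \sum_((k - m).+1 <= t < k.+1)
    enorm (tX (rot_tasks t) *m iterate rot_tasks id k - ty (rot_tasks t)) ^+ 2.
  by apply: sumr_ge0 => t _; exact: sqr_ge0.
rewrite sumr_const_nat subn1 /= -mulr_natl in hsum_first.
rewrite (_ : _ / _ * _ = k%:R^-1 * ((k - m)%:R * (1 - 4 / M))); last by ring.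
apply: ler_wpM2l; first by rewrite invr_ge0 ler0n.
lra.
Qed.

End RotatingTasks.

Lemma exists_ceil_sqrt k : (2 <= k)%N ->
  exists m, [/\ (2 <= m <= k)%N, (m.-1 * m.-1 < k)%N & (k <= m * m)%N].
Proof.
move=> hk; have hex : exists n, (k <= n * n)%N by exists k; nia.
have [m hkm hmin] := ex_minnP hex.
have hmk : (m <= k)%N by apply: hmin; nia.
have hm1 : (m.-1 * m.-1 < k)%N.
  by rewrite ltnNge; apply/negP => /hmin; lia.
by exists m; split=> //; apply/andP; split=> //; nia.
Qed.

Lemma exists_in_ST_forgetting_ge (R : realType) d k : (2 <= d)%N -> (2 <= k)%N ->
  exists S : nat -> task R d,
    in_ST k S /\ 1 - forgetting S id k <= 6 / Num.sqrt k%:R.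
Proof.
move=> hd hk.
pose i0 : 'I_d := Ordinal (ltn_trans (ltnSn 0) hd).
pose i1 : 'I_d := Ordinal hd.
have i01 : i0 != i1 by [].
have [m [/andP[hm2 hmk] hm1 hkm]] := exists_ceil_sqrt hk.
exists (rot_tasks R i0 i1 k m); split; first exact: rot_tasks_in_ST.
have := @forgetting_rot_tasks_ge R _ _ _ i01 _ _ hm2 hmk; rewrite natrB //.
set K : R := k%:R; set M : R := m%:R; set s := Num.sqrt K => hlb.
have hsK : s ^+ 2 = K by rewrite sqr_sqrtr ?ler0n.
have hs0 : 0 <= s by exact: sqrtr_ge0.
have hK2 : 2 <= K by rewrite /K (ler_nat R 2 k).
have hMK : K <= M ^+ 2 by rewrite /K /M -natrX ler_nat expnS expn1.
have hM1 : (M - 1) ^+ 2 < K.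
  have hm0 : (0 < m)%N by lia.
  by rewrite /K /M -{1}(prednK hm0) -natr1 addrK -natrX ltr_nat expnS expn1.
have hs1 : 1 <= s by nra.
have hsM : s <= M by nra.
have hMs : M <= s + 1 by nra.
by have := sqrt_gap_bound hs1 hsK hsM hMs; lra.
Qed.

Lemma sup_forgetting_id_ge (R : realType) d k : (2 <= d)%N -> (2 <= k)%N ->
  1 - sup_forgetting_id R d k <= 6 / Num.sqrt k%:R.
Proof.
move=> hd hk; have [S [hS hF]] := exists_in_ST_forgetting_ge R hd hk.
have hsup : has_sup [set x | exists S : nat -> task R d, in_ST k S /\ x = forgetting S id k].
  split; first by exists (forgetting S id k); exists S.
  by exists 1 => x [S' [hS' ->]]; exact: forgetting_le1.
have := sup_upper_bound hsup (ex_intro _ S (conj hS erefl)).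
rewrite /sup_forgetting_id; lra.
Qed.

Lemma exists_in_ST_forgetting_gt (R : realType) d (eps : R) :
  (2 <= d)%N -> 0 < eps < 1 ->
  exists (k : nat) (S : nat -> task R d),
    k%:R <= 37 / eps ^+ 2 /\ in_ST k S /\ forgetting S id k > 1 - eps.
Proof.
move=> hd /andP[he0 he1].
set a : R := 36 / eps ^+ 2.
have he2 : 0 < eps ^+ 2 by apply: exprn_gt0.
have ha36 : 36 <= a by rewrite /a ler_pdivlMr //; nra.
have ha0 : 0 <= a by lra.
have /andP[hk1 hk2] := truncn_itv ha0.
set k := (Num.truncn a).+1.
have hk : (2 <= k)%N by rewrite -(ltr_nat R 1) mulr1n /k; lra.
have [S [hS hF]] := exists_in_ST_forgetting_ge R hd hk.
exists k, S; split; last split => //.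
  have : a + 1 <= 37 / eps ^+ 2.
    by rewrite /a ler_pdivlMr // mulrDl mulfVK ?lt0r_neq0 //; nra.
  by rewrite /k -natr1; lra.
have h6 : 0 <= 6 / eps by rewrite divr_ge0 // ltW.
have hs : 6 / eps < Num.sqrt k%:R.
  rewrite -[X in X < _](ger0_norm h6) -sqrtr_sqr ltr_sqrt ?ltr0n //.
  rewrite exprMn exprVn (_ : 6 ^+ 2 = 36 :> R); last by rewrite expr2; lra.
  by rewrite -/(36 / eps ^+ 2) -/a /k.
have : 6 / Num.sqrt k%:R < eps.
  by rewrite ltr_pdivrMr ?(le_lt_trans h6 hs) // mulrC -ltr_pdivrMr.
lra.
Qed.

Theorem mainTheorem2 (R : realType) :
  exists C : R, 0 < C /\
    (forall d k : nat, (2 <= d)%N -> (2 <= k)%N ->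
       1 - sup_forgetting_id R d k <= C / Num.sqrt (k%:R)) /\
    (forall d : nat, (2 <= d)%N ->
       exists C' : R, 0 < C' /\
         forall eps : R, 0 < eps < 1 ->
           exists (k : nat) (S : nat -> task R d),
             k%:R <= C' / eps ^+ 2 /\ in_ST k S /\ forgetting S id k > 1 - eps).
Proof.
exists 6; split=> //; split; first exact: sup_forgetting_id_ge.
move=> d hd; exists 37; split=> // eps; exact: exists_in_ST_forgetting_gt.
Qed.
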